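(* Let $p>3$ be a prime, $e$ a positive integer, $q=p^e$, and $k$ an integer with $1\le k\le e$. Then $D_{p^k,3}(1,x)$ is not a permutation polynomial of $\mathbb{F}_q$.
   Context: For $n\ge 1$ and $a\in\mathbb{F}_q$, $D_{n,3}(a,x)=\sum_{i=0}^{\lfloor n/2\rfloor}\frac{n-3i}{n-i}\binom{n-i}{i}(-x)^i a^{n-2i}\in\mathbb{F}_q[x]$, where each coefficient $\frac{n-3i}{n-i}\binom{n-i}{i}$ is an integer read modulo $p$; and $D_{0,3}(a,x)=-1$. A polynomial $g\in\mathbb{F}_q[x]$ is a permutation polynomial of $\mathbb{F}_q$ if $c\mapsto g(c)$ is a bijection $\mathbb{F}_q\to\mathbb{F}_q$. *)

From HB Require Import structures.
From mathcomp Require Import all_boot all_order all_algebra all_field.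
Set Implicit Arguments. Unset Strict Implicit. Unset Printing Implicit Defensive.
Import GRing.Theory.
Local Open Scope ring_scope.

(* The integer coefficient (n-3i)/(n-i) * C(n-i,i) of D_{n,3}; the division
   is exact for 0 <= i <= n/2, n >= 1, so we compute it with divz. *)
Definition dickson3_coef (n i : nat) : int :=
  (((n%:Z - 3 * i%:Z) * ('C(n - i, i))%:Z) %/ (n - i)%:Z)%Z.

Definition dickson3 (R : nzRingType) (n : nat) (a : R) : {poly R} :=
  if n is 0 then -1
  else \sum_(0 <= i < n./2.+1)
         ((dickson3_coef n i)%:~R * a ^+ (n - i.*2)) *: (- 'X) ^+ i.

Definition is_perm_poly (F : finFieldType) (g : {poly F}) : Prop :=
  bijective (fun c : F => g.[c]).

(** Write [D_n] for [D_{n,3}(1, x)] and put [y = -x].  Splitting the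
    coefficient [(n-3i)/(n-i) C(n-i,i)] as [C(n-i,i) - 2 C(n-i-1,i-1)] gives
    [D_n = E_n(y) - 2 y E_{n-2}(y)], where [E_n(y) = sum_i C(n-i,i) y^i]
    satisfies [E_{n+2} = E_{n+1} + y E_n].  At [y = 3/4] the characteristic
    roots are [3/2] and [-1/2], so [4 2^n D_n = 3^n - 5 (-1)^n].  For
    [n = p^k] the Frobenius fixes [2], [3] and [-1], hence [D_n(-3/4) = 1],
    and also [D_n(0) = E_n(0) = 1]: two distinct points share an image. *)

From HB Require Import structures.
From mathcomp Require Import all_boot all_order all_algebra all_field.
From mathcomp Require Import zify ring.
Set Implicit Arguments. Unset Strict Implicit. Unset Printing Implicit Defensive.
Import GRing.Theory.
Local Open Scope ring_scope.

Lemma bin_subSS n i : 'C(n.+1 - i, i.+1) = ('C(n - i, i.+1) + 'C(n - i, i))%N.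
Proof.
have [le_in | lt_ni] := leqP i n; first by rewrite subSn // binS.
have -> : (n.+1 - i = 0)%N by lia.
have -> : (n - i = 0)%N by lia.
by rewrite !bin0n; case: i lt_ni.
Qed.

Lemma dickson3_coefS n i : (i.+1 < n)%N ->
  dickson3_coef n i.+1 = ('C(n - i.+1, i.+1))%:Z - 2 * ('C(n - i.+2, i))%:Z.
Proof.
move=> lt_in; have [m ->] : exists m, n = (m.+1 + i.+1)%N by exists (n - i.+2)%N; lia.
rewrite /dickson3_coef.
have -> : (m.+1 + i.+1 - i.+1 = m.+1)%N by lia.
have -> : (m.+1 + i.+1 - i.+2 = m)%N by lia.
have := congr1 (fun x : nat => x%:Z) (mul_bin_diag m.+1 i); rewrite /= !PoszM.
set C1 := ('C(m.+1, i.+1))%:Z; set C0 := ('C(m, i))%:Z => binC.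
suff -> : ((m.+1 + i.+1)%N%:Z - 3 * (i.+1)%:Z) * C1 = (m.+1)%:Z * (C1 - 2 * C0).
  by rewrite mulKz.
apply/eqP; rewrite -subr_eq0.
have -> : ((m.+1 + i.+1)%N%:Z - 3 * (i.+1)%:Z) * C1 - (m.+1)%:Z * (C1 - 2 * C0)
   = 2 * ((m.+1)%:Z * C0 - (i.+1)%:Z * C1) by rewrite PoszD; ring.
by rewrite binC subrr mulr0.
Qed.

(* [dickson2E y n] is [E_n(1, -y)], where [E_n(a, x)] is the Dickson
   polynomial of the second kind. *)
Definition dickson2E (R : nzRingType) (y : R) n :=
  \sum_(0 <= i < n.+1) ('C(n - i, i))%:R * y ^+ i.

Section SecondKind.

Variable R : comNzRingType.
Implicit Types y : R.

Lemma dickson2E0 n : dickson2E (0 : R) n = 1.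
Proof.
rewrite /dickson2E big_nat_recl // big1 ?addr0 ?subn0 ?bin0 ?expr0 ?mulr1 // => i _.
by rewrite expr0n mulr0.
Qed.

Lemma dickson2ESS y n : dickson2E y n.+2 = dickson2E y n.+1 + y * dickson2E y n.
Proof.
rewrite /dickson2E big_nat_recl // [in X in _ = X + _]big_nat_recl //.
rewrite !subn0 !bin0.
under eq_bigr => i _ do rewrite subSS bin_subSS natrD mulrDl.
rewrite big_split /= -addrA; congr (_ + _).
under [X in _ = X + _]eq_bigr => i _ do rewrite subSS.
rewrite big_nat_recr //= [X in _ + X]big_nat_recr //=.
have -> : (n - n.+1 = 0)%N by lia.
rewrite !bin0n /= !mul0r !addr0.
congr (_ + _); rewrite mulr_sumr; apply: eq_bigr => i _.
by rewrite exprS mulrCA.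
Qed.

Lemma horner_dickson3_1 n y : (1 < n)%N ->
  (dickson3 n (1 : R)).[- y] = dickson2E y n - 2 * y * dickson2E y n.-2.
Proof.
case: n => [|[|m]] // _; rewrite /dickson3 horner_sum /=.
under eq_bigr => i _ do rewrite hornerZ horner_exp hornerN hornerX opprK expr1n mulr1.
set f := fun i => (dickson3_coef m.+2 i)%:~R * y ^+ i : R.
have le_half : (m.+2./2.+1 <= m.+2)%N by rewrite ltnS leq_half_double -addnn; lia.
rewrite (_ : \sum_(0 <= i < m.+2./2.+1) _ = \sum_(0 <= i < m.+2) f i); last first.
  rewrite (big_cat_nat (n := m.+2./2.+1) (p := m.+2)) //= -[LHS]addr0; congr (_ + _).
  symmetry; rewrite big_nat; apply: big1 => i /andP[half_lt_i _].
  rewrite /f /dickson3_coef bin_small ?mulr0 ?div0z ?mul0r //.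
  have := odd_double_half m; have : (odd m <= 1)%N by case: odd.
  rewrite -addnn; lia.
rewrite big_nat_recl // /f {1}/dickson3_coef subn0 bin0 mulr0 subr0 mulr1.
rewrite [X in (X %/ _)%Z]mulr1 divzz /=.
under eq_big_nat => i /andP[_ lt_i] do
  rewrite dickson3_coefS // rmorphB rmorphM /= !subSS -!pmulrn.
rewrite /dickson2E [X in _ = X - _]big_nat_recl // subn0 bin0 expr0 mulr1.
rewrite -!pmulrn -addrA; congr (_ + _).
rewrite [X in _ = X - _]big_nat_recr //= subnn bin0n /= mul0r addr0.
under eq_bigr => i _ do rewrite mulrBl.
rewrite sumrB; congr (_ - _); rewrite mulr_sumr; apply: eq_bigr => i _.
by rewrite exprS; ring.
Qed.

Lemma horner0_dickson3_1 n : (1 < n)%N -> (dickson3 n (1 : R)).[0] = 1.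
Proof.
by move=> lt1n; rewrite -oppr0 horner_dickson3_1 // !dickson2E0 mulr0 mul0r subr0.
Qed.

Lemma dickson2E_three_quarters y n :
  4 * y = 3 -> 4 * 2 ^+ n * dickson2E y n = 3 ^+ n.+1 + (-1) ^+ n.
Proof.
move=> y34; suff: 4 * 2 ^+ n * dickson2E y n = 3 ^+ n.+1 + (-1) ^+ n /\
                  4 * 2 ^+ n.+1 * dickson2E y n.+1 = 3 ^+ n.+2 + (-1) ^+ n.+1.
  by case.
elim: n => [|n [IHn IHn1]].
  rewrite /dickson2E big_nat1 big_nat_recr //= big_nat1 subnn !bin0n /=.
  by rewrite !expr0 !expr1 !mulr1 mul0r addr0; split; ring.
split=> //; rewrite dickson2ESS.
have -> : 4 * 2 ^+ n.+2 * (dickson2E y n.+1 + y * dickson2E y n) =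
  2 * (4 * 2 ^+ n.+1 * dickson2E y n.+1) + (4 * y) * (4 * 2 ^+ n * dickson2E y n).
  by rewrite !exprS; ring.
by rewrite IHn IHn1 y34 !exprS; ring.
Qed.

Lemma dickson3_three_quarters y n : 4 * y = 3 -> (1 < n)%N ->
  4 * 2 ^+ n * (dickson3 n (1 : R)).[- y] = 3 ^+ n - 5 * (-1) ^+ n.
Proof.
move=> y34; case: n => [|[|m]] // _; rewrite horner_dickson3_1 //=.
have -> : 4 * 2 ^+ m.+2 * (dickson2E y m.+2 - 2 * y * dickson2E y m) =
    4 * 2 ^+ m.+2 * dickson2E y m.+2 - 2 * (4 * y) * (4 * 2 ^+ m * dickson2E y m).
  by rewrite !exprS; ring.
by rewrite !dickson2E_three_quarters // y34 !exprS; ring.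
Qed.

End SecondKind.

Lemma expr_pexp_fixed (R : nzSemiRingType) (x : R) p k :
  x ^+ p = x -> x ^+ (p ^ k) = x.
Proof. by move=> xp; elim: k => [|k IHk]; rewrite ?expr1 // expnS exprM xp. Qed.

Lemma natr_exp_pchar (R : nzSemiRingType) p k n :
  p \in [pchar R] -> n%:R ^+ (p ^ k) = n%:R :> R.
Proof.
by move=> charRp; rewrite expr_pexp_fixed // -pFrobenius_autE pFrobenius_aut_nat.
Qed.

Lemma signr_exp_pchar (R : nzRingType) p k :
  p \in [pchar R] -> (-1) ^+ (p ^ k) = -1 :> R.
Proof.
move=> charRp.
by rewrite expr_pexp_fixed // -pFrobenius_autE pFrobenius_autN pFrobenius_aut1.
Qed.

Theorem corollary2p8 (p e k : nat) (F : finFieldType) :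
  prime p -> (3 < p)%N -> (0 < e)%N -> (1 <= k <= e)%N -> #|F| = (p ^ e)%N ->
  ~ is_perm_poly (dickson3 (p ^ k) (1 : F)).
Proof.
move=> p_pr p_gt3 _ /andP[k_gt0 _] cardF /bij_inj D_inj.
have charFp : p \in [pchar F] := card_finPcharP cardF p_pr.
have natr_neq0 j : (0 < j < p)%N -> (j%:R : F) != 0.
  by case/andP=> j_gt0 j_lt_p; rewrite -(dvdn_pcharf charFp) gtnNdvd.
have [two_neq0 three_neq0] : (2 : F) != 0 /\ (3 : F) != 0.
  by split; apply: natr_neq0; lia.
have four_neq0 : (4 : F) != 0 by rewrite (_ : 4 = 2 * 2) ?mulf_neq0 //; ring.
have n_gt1 : (1 < p ^ k)%N by rewrite -[1%N](expn0 p) ltn_exp2l ?prime_gt1.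
pose y : F := 3 / 4.
have y34 : 4 * y = 3 by rewrite mulrC mulfVK.
have Dy : (dickson3 (p ^ k) (1 : F)).[- y] = 1.
  have := dickson3_three_quarters y34 n_gt1.
  rewrite !natr_exp_pchar ?signr_exp_pchar //.
  rewrite (_ : 3 - 5 * -1 = 4 * 2 * 1 :> F); last by ring.
  by move/(mulfI (mulf_neq0 four_neq0 two_neq0)).
have := D_inj 0 (- y); rewrite /= horner0_dickson3_1 // Dy => /(_ erefl) /eqP.
by rewrite eq_sym oppr_eq0 /y mulf_eq0 invr_eq0 (negbTE three_neq0) (negbTE four_neq0).
Qed.
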